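(* Let $\mu\ge 2$ and $D\ge 1$ be integers, and let $(V,T)$ be the deterministic rooted tree of depth $D$ with root $v_o$ in which every node at depth less than $D$ has exactly $\mu$ children; let $L$ be its set of $\mu^D$ leaves and $V_d$ the set of nodes at depth $d$. Every leaf carries the same mark $F_x=\nu>0$, and $F_v:=\sum_{x\in L(v)}F_x$ for $v\in V$, where $L(v)$ is the set of leaves descended from $v$. Labels $\chi$ on $V$ are generated as follows: given $\rho_1,\dots,\rho_D\in[0,1]$, let $\{Z_u,u\ne v_o\}$ be independent Bernoulli variables with $\mathbf{E}[Z_u]=\rho_d$ for $u\in V_d$; the root gets label $0$; in order of increasing depth, a node with $Z_u=0$ copies its parent's label and a node with $Z_u=1$ gets a brand new label. Independently, each leaf $x$ is declared wild with probability $\omega\in[0,1]$ (independently over leaves), and tame otherwise. Let $(q_1,\dots,q_D)$ be a probability distribution on $\{1,\dots,D\}$. Edges are generated as follows: let $N$ be a nonnegative integer random variable with $\mathbf{E}[N]=\nu\mu^D/2$, independent of everything else. For each of $N$ independent attempts: draw a height $s\in\{1,\dots,D\}$ with probability $q_s$; choose a node $v\in V_{D-s}$ with probability $F_v/F_{v_o}$; run two independent random walks from $v$, each of which, at a non-leaf node $u$, moves to a child $u'$ with probability $F_{u'}/F_u$, until absorbed at leaves $x$ and $y$. The attempt produces an agreement multi-edge if $x\neq y$ and $\chi(x)=\chi(y)$, and a conflict multi-edge if $\chi(x)\ne\chi(y)$ and at least one of $x,y$ is wild. For $t=0,\dots,D-1$ put $A_t:=\prod_{d=D-t}^{D}(1-\rho_d)^2$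 and $C_t:=(1-A_t)\,\omega(2-\omega)$. Then the expected number $M_A$ of agreement multi-edges and the expected number $M_C$ of conflict multi-edges are exactly \[ M_A=\frac{\nu\mu^D(\mu-1)}{2}\sum_{s=1}^{D}q_s\mu^{-s}\sum_{t=0}^{s-1}A_t\mu^t,\qquad M_C=\frac{\nu\mu^D(\mu-1)}{2}\sum_{s=1}^{D}q_s\mu^{-s}\sum_{t=0}^{s-1}C_t\mu^t. \]
   Context: Depth is distance from the root; the height of a node at depth $d$ is $D-d$. All random ingredients (tree labels, wildness, $N$, heights, start nodes, walks) are independent of one another except as specified. *)

From HB Require Import structures.
From mathcomp Require Import all_boot all_order all_algebra.
From mathcomp Require Import all_classical all_reals all_analysis.
Set Implicit Arguments. Unset Strict Implicit. Unset Printing Implicit Defensive.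
Import Order.TTheory GRing.Theory Num.Theory.
Local Open Scope ring_scope.

(* A leaf is a word x : 'I_D -> 'I_mu (its path from the root).
   A node at depth d (0 <= d <= D) is encoded by a "key": the function
   i |-> Some (x i) for i < d and None for i >= d, where x is any leaf below it.
   anc d x is the ancestor of leaf x at depth d; anc 0 x is the root. *)
Section Model.
Variables (mu D : nat).

Definition leaf := {ffun 'I_D -> 'I_mu}.
Definition key := {ffun 'I_D -> option 'I_mu}.

Definition anc (d : nat) (x : leaf) : key :=
  [ffun i : 'I_D => if (i < d)%N then Some (x i) else None].

Definition root_key : key := [ffun _ => None].

Definition key_depth (k : key) : nat := #|[pred i | k i != None]|.

Definition is_nonroot_node (k : key) : bool :=
  [exists d : 'I_D, exists x : leaf, k == anc d.+1 x].
Definition nonroot := {k : key | is_nonroot_node k}.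

Variable R : realType.
Variables (nu : R) (rho : nat -> R) (omega : R) (q : nat -> R).

(* F_v = sum of the marks F_x = nu over leaves x descended from v,
   for v given as a key at depth d (zero if the key is not a node of depth d) *)
Definition F (d : nat) (v : key) : R := \sum_(x : leaf | anc d x == v) nu.

(* probability that the random walk started at node v (at depth d)
   is absorbed at leaf x: product of the step probabilities F_{u'}/F_u *)
Definition walk (d : nat) (v : key) (x : leaf) : R :=
  if anc d x == v then \prod_(d <= j < D) (F j.+1 (anc j.+1 x) / F j (anc j x))
  else 0.

(* one attempt: (s-1, v, x, y) with height s = s-1 + 1 in {1..D},
   start node v in V_{D-s}, endpoints x, y of the two walks *)
Definition attempt := ('I_D * key * leaf * leaf)%type.

Definition att_weight (a : attempt) : R :=
  let: (s, v, x, y) := a in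
  let h := s.+1 in
  q h * (F (D - h) v / F 0 root_key) * walk (D - h) v x * walk (D - h) v y.

Definition Zlab := {ffun nonroot -> bool}.
Definition Zk (Z : Zlab) (k : key) : bool :=
  match (insub k : option nonroot) with Some u => Z u | None => false end.

(* labels: the root gets label root_key ("0"); going down, a node with Z=0
   copies the parent's label, a node with Z=1 gets the new label "itself"
   (its key, which no other node carries). chi_d Z d x = label of anc d x. *)
Fixpoint chi_d (Z : Zlab) (d : nat) (x : leaf) : key :=
  match d with
  | 0 => root_key
  | d'.+1 => if Zk Z (anc d'.+1 x) then anc d'.+1 x else chi_d Z d' x
  end.
Definition chi (Z : Zlab) (x : leaf) : key := chi_d Z D x.

Definition Wild := {ffun leaf -> bool}.

Definition PZ (Z : Zlab) : R :=
  \prod_(u : nonroot)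
     (if Z u then rho (key_depth (val u)) else 1 - rho (key_depth (val u))).
Definition PW (W : Wild) : R :=
  \prod_(x : leaf) (if W x then omega else 1 - omega).

Definition agreement (Z : Zlab) (W : Wild) (a : attempt) : bool :=
  let: (_, _, x, y) := a in (x != y) && (chi Z x == chi Z y).
Definition conflict (Z : Zlab) (W : Wild) (a : attempt) : bool :=
  let: (_, _, x, y) := a in (chi Z x != chi Z y) && (W x || W y).

(* expected number of attempts of kind E among n independent attempts
   (labels and wildness drawn independently of the attempts) *)
Definition expected_count (E : Zlab -> Wild -> attempt -> bool) (n : nat) : R :=
  \sum_(Z : Zlab) \sum_(W : Wild) \sum_(a : n.-tuple attempt)
     PZ Z * PW W * (\prod_(i < n) att_weight (tnth a i)) * (count (E Z W) a)%:R.

End Model.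

From HB Require Import structures.
From mathcomp Require Import all_boot all_order all_algebra.
From mathcomp Require Import all_classical all_reals all_analysis.
From mathcomp Require Import ring zify.
Import Order.TTheory GRing.Theory Num.Theory.
Import numFieldNormedType.Exports.
Set Implicit Arguments. Unset Strict Implicit. Unset Printing Implicit Defensive.
Local Open Scope classical_set_scope.
Local Open Scope ring_scope.

(* Given N = n, the attempts are i.i.d. and independent of the labels and the
   wildness, so the expected count is n times the probability p of the event for
   one attempt, and averaging over N gives E[N] p.  In one attempt of height s
   the two walks end at leaves x, y that are independent and uniform below a
   uniform node of depth D - s; for a fixed leaf x exactly (mu - 1) mu^t leaves y
   have their last common ancestor with x at depth D - t - 1.  For x <> y,
   chi(x) = chi(y) iff no node strictly below that ancestor on the two paths is
   relabelled, which has probability A_t; a conflict needs in addition one of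
   the two distinct leaves to be wild, which has probability omega (2 - omega). *)

Section FiniteSums.
Variable R : comNzRingType.

Lemma natr_all (T : Type) (a : pred T) (s : seq T) :
  (all a s)%:R = \prod_(t <- s) (a t)%:R :> R.
Proof.
elim: s => [|t s IH]; first by rewrite big_nil.
by rewrite big_cons /= -IH; case: (a t); rewrite ?mul1r ?mul0r.
Qed.

Lemma sum_natr_pred (T : finType) (P : pred T) : \sum_x (P x)%:R = #|P|%:R :> R.
Proof.
rewrite -sum1_card natr_sum [RHS]big_mkcond /=; apply: eq_bigr => x _.
by rewrite unfold_in; case: (P x).
Qed.

Lemma sum_eq_indicator (T : finType) (k : T) (g : T -> R) :
  \sum_v (k == v)%:R * g v = g k.
Proof.
rewrite (bigD1 k) //= eqxx mul1r big1 ?addr0 // => v.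
by rewrite eq_sym => /negbTE ->; rewrite mul0r.
Qed.

Lemma sum_by_fibers (T : finType) (f : T -> nat) (G : nat -> R) n :
  (forall x, (f x < n)%N) ->
  \sum_x G (f x) = \sum_(k < n) #|[pred x | f x == k]|%:R * G k.
Proof.
move=> f_lt; transitivity (\sum_x \sum_(k < n) (Ordinal (f_lt x) == k)%:R * G k).
  by apply: eq_bigr => x _; rewrite sum_eq_indicator.
rewrite exchange_big; apply: eq_bigr => k _.
rewrite -sum_natr_pred mulr_suml; apply: eq_bigr => x _.
by rewrite -(inj_eq val_inj).
Qed.

Lemma sum_pair (A B : finType) (G : A * B -> R) :
  \sum_p G p = \sum_a \sum_b G (a, b).
Proof. by rewrite pair_bigA; apply: eq_bigr => -[]. Qed.

Lemma sum_quadruple (A B C E : finType) (G : A * B * C * E -> R) :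
  \sum_p G p = \sum_a \sum_b \sum_c \sum_e G (a, b, c, e).
Proof.
rewrite (sum_pair G) (sum_pair (fun abc => \sum_e G (abc, e))).
exact: (sum_pair (fun ab => \sum_c \sum_e G (ab, c, e))).
Qed.

Lemma sum_bernoulli_all_false (T : finType) (p : T -> R) (s : seq T) : uniq s ->
  \sum_(f : {ffun T -> bool})
     (\prod_t (if f t then p t else 1 - p t)) * \prod_(t <- s) (~~ f t)%:R
  = \prod_(t <- s) (1 - p t).
Proof.
move=> uniq_s; rewrite [RHS]big_uniq // [RHS]big_mkcond /=.
have inS f : \prod_(t <- s) (~~ f t)%:R
             = \prod_t (if t \in s then (~~ f t)%:R else 1) :> R.
  by rewrite big_uniq // big_mkcond.
under eq_bigr => f _ do rewrite inS -big_split /=.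
rewrite -(bigA_distr_bigA (fun t (b : bool) =>
  (if b then p t else 1 - p t) * (if t \in s then (~~ b)%:R else 1))) /=.
apply: eq_bigr => t _; rewrite big_bool /=.
by case: (t \in s); rewrite /= ?mulr1 ?mulr0 ?add0r // addrC subrK.
Qed.

Lemma natr_count_tnth (T : eqType) n (t : n.-tuple T) (P : pred T) :
  (count P t)%:R = \sum_(i < n) (P (tnth t i))%:R :> R.
Proof.
rewrite -sum1_count big_tuple natr_sum big_mkcond /=.
by apply: eq_bigr => i _; case: (P _).
Qed.

Lemma sum_iid_count (T : finType) (w : T -> R) (P : pred T) n :
  \sum_x w x = 1 ->
  \sum_(t : n.-tuple T) (\prod_(i < n) w (tnth t i)) * (count P t)%:R
  = n%:R * \sum_x w x * (P x)%:R.
Proof.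
move=> w1.
pose tup (f : {ffun 'I_n -> T}) : n.-tuple T := [tuple f i | i < n].
pose fun_of (t : n.-tuple T) : {ffun 'I_n -> T} := [ffun i => tnth t i].
have tupK : cancel tup fun_of.
  by move=> f; apply/ffunP => i; rewrite ffunE tnth_mktuple.
have fun_ofK : cancel fun_of tup.
  by move=> t; apply: eq_from_tnth => i; rewrite tnth_mktuple ffunE.
rewrite (reindex tup); last by exists fun_of => x _; [apply: tupK | apply: fun_ofK].
under eq_bigr => f _ do rewrite natr_count_tnth mulr_sumr.
rewrite exchange_big /= mulr_natl -[X in _ *+ X]card_ord -sumr_const.
apply: eq_bigr => i _.
have marked f : \prod_(j < n) w (tnth (tup f) j) * (P (tnth (tup f) i))%:R
    = \prod_(j < n) (if j == i then w (f j) * (P (f j))%:R else w (f j)).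
  rewrite (bigD1 i) //= [RHS](bigD1 i) //= eqxx tnth_mktuple mulrAC.
  by congr (_ * _); apply: eq_bigr => j /negbTE ->; rewrite tnth_mktuple.
under eq_bigr => f _ do rewrite marked.
rewrite -(bigA_distr_bigA (fun j x => if j == i then w x * (P x)%:R else w x)) /=.
rewrite (bigD1 i) //= eqxx [X in _ * X]big1 ?mulr1 // => j /negbTE ->.
exact: w1.
Qed.

End FiniteSums.

Section Tree.
Variables mu D : nat.
Local Notation leaf := (leaf mu D).
Local Notation key := (key mu D).
Implicit Types (x y : leaf) (d e k : nat).

Lemma ancE d x i : anc d x i = if (i < d)%N then Some (x i) else None.
Proof. by rewrite ffunE. Qed.

Lemma anc_eqP d x y :
  reflect (forall i : 'I_D, (i < d)%N -> x i = y i) (anc d x == anc d y).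
Proof.
apply: (iffP eqP) => [eq_xy i lt_id|eq_xy].
  by move: (congr1 (fun k : key => k i) eq_xy); rewrite !ancE lt_id => -[].
by apply/ffunP => i; rewrite !ancE; case: ifP => // /eq_xy ->.
Qed.

Lemma anc0 x : anc 0 x = root_key mu D.
Proof. by apply/ffunP => i; rewrite ancE /root_key. Qed.

Lemma eq_ancD x y : (anc D x == anc D y) = (x == y).
Proof. by apply/anc_eqP/eqP => [eq_xy|-> //]; apply/ffunP => i; apply: eq_xy. Qed.

Lemma key_depth_anc d x : (d <= D)%N -> key_depth (anc d x) = d.
Proof.
move=> dD; rewrite /key_depth.
rewrite (eq_card (B := [pred i : 'I_D | (i < d)%N])); last first.
  by move=> i; rewrite !inE ancE; case: ifP.
rewrite -sum1_card -(big_mkord (fun i => (i < d)%N) (fun _ => 1%N)).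
by rewrite -(big_nat_widen 0 d D xpredT) // sum_nat_const_nat muln1 subn0.
Qed.

Lemma anc_depth_inj d e x y : (d <= D)%N -> (e <= D)%N -> anc d x = anc e y -> d = e.
Proof.
wlog le_de : d e x y / (d <= e)%N => [sym dD eD eq_xy|].
  case: (leqP d e) => [le|/ltnW le]; first exact: sym le dD eD eq_xy.
  exact/esym/(sym e d y x le eD dD).
rewrite leq_eqVlt in le_de; case/orP: le_de => [/eqP //|lt_de _ eD eq_xy].
have dD : (d < D)%N by apply: leq_trans lt_de eD.
by move: (congr1 (fun k : key => k (Ordinal dD)) eq_xy); rewrite !ancE /= ltnn lt_de.
Qed.

Lemma is_nonroot_anc d x : (0 < d <= D)%N -> is_nonroot_node (anc d x).
Proof.
case: d => // d /andP[_ dD]; apply/existsP; exists (Ordinal dD).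
by apply/existsP; exists x.
Qed.

Lemma card_anc d x : (d <= D)%N ->
  #|[pred y | anc d y == anc d x]| = (mu ^ (D - d))%N.
Proof.
move=> dD.
pose fixed (i : 'I_D) := if (i < d)%N then pred1 (x i) else predT.
have -> : #|[pred y | anc d y == anc d x]| = #|family fixed|.
  apply: eq_card => y; rewrite !inE; apply/anc_eqP/familyP => [eq_xy i|eq_xy i lt_id].
    by rewrite /fixed; case: ifP => // lt_id; rewrite inE eq_xy.
  by have := eq_xy i; rewrite /fixed lt_id inE => /eqP.
rewrite card_family foldrE big_map big_enum /=.
rewrite (eq_bigr (fun i : 'I_D => if (i < d)%N then 1%N else mu)); last first.
  by move=> i _; rewrite /fixed; case: ifP => _; rewrite ?card1 ?card_ord.
rewrite -(big_mkord xpredT (fun i => if (i < d)%N then 1%N else mu)).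
rewrite (@big_cat_nat _ _ _ d) //= big_nat_cond big1; last first.
  by move=> i /andP[/andP[_ ->]].
rewrite mul1n big_nat_cond (eq_bigr (fun _ => mu)); last first.
  by move=> i /andP[/andP[]]; rewrite leqNgt => /negbTE ->.
by rewrite -big_nat_cond prod_nat_const_nat.
Qed.

Definition lca_depth x y : nat := \max_(d < D.+1 | anc d x == anc d y) d.

Lemma lca_depth_le x y : (lca_depth x y <= D)%N.
Proof. by apply/bigmax_leqP => d _; rewrite -ltnS. Qed.

Lemma eq_anc_lca d x y : (d <= D)%N -> (anc d x == anc d y) = (d <= lca_depth x y)%N.
Proof.
move=> dD; apply/idP/idP => [eq_xy|le_d].
  exact: (@leq_bigmax_cond _ (fun e : 'I_D.+1 => anc e x == anc e y)
            (fun e : 'I_D.+1 => nat_of_ord e) (Ordinal (dD : (d < D.+1)%N))).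
apply/anc_eqP => i lt_id; apply/eqP/negPn/negP => neq_xy.
have : (lca_depth x y <= i)%N.
  apply/bigmax_leqP => e /anc_eqP eq_xy; rewrite leqNgt; apply/negP => lt_ie.
  by move/eqP: neq_xy; apply; apply: eq_xy.
by move=> /(leq_trans le_d); rewrite leqNgt lt_id.
Qed.

Lemma lca_depth_ltD x y : (lca_depth x y < D)%N = (x != y).
Proof. by rewrite -eq_ancD eq_anc_lca // ltnNge. Qed.

Lemma card_lca_depth x k : (k < D)%N ->
  #|[pred y | lca_depth x y == k]| = (mu ^ (D - k) - mu ^ (D - k.+1))%N.
Proof.
move=> kD.
have card_ge e : (e <= D)%N -> #|[pred y | (e <= lca_depth x y)%N]| = (mu ^ (D - e))%N.
  move=> eD; rewrite -(card_anc x eD).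
  by apply: eq_card => y; rewrite !inE eq_sym eq_anc_lca.
rewrite -(card_ge _ (ltnW kD)) -(card_ge _ kD).
rewrite -(cardID [pred y | (k.+1 <= lca_depth x y)%N] [pred y | (k <= lca_depth x y)%N]).
rewrite (@eq_card _ [predI _ & _] [pred y | (k.+1 <= lca_depth x y)%N]); last first.
  by move=> y; rewrite !inE; case: ltngtP.
by rewrite addKn; apply: eq_card => y; rewrite !inE; case: ltngtP.
Qed.

End Tree.

Section Labels.
Variables mu D : nat.
Local Notation leaf := (leaf mu D).
Local Notation key := (key mu D).
Implicit Types (Z : Zlab mu D) (x y : leaf) (d k : nat).

Fixpoint label_depth Z d x : nat :=
  match d with
  | 0 => 0
  | d'.+1 => if Zk Z (anc d'.+1 x) then d'.+1 else label_depth Z d' x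
  end.

Lemma chi_dE Z d x : chi_d Z d x = anc (label_depth Z d x) x.
Proof. by elim: d => [|d IH] /=; [rewrite anc0 | case: ifP]. Qed.

Lemma label_depth_le Z d x : (label_depth Z d x <= d)%N.
Proof. by elim: d => //= d IH; case: ifP => // _; apply: leqW. Qed.

Lemma label_depth_leP Z d x k : (k <= d)%N ->
  (label_depth Z d x <= k)%N = all (fun e => ~~ Zk Z (anc e x)) (iota k.+1 (d - k)).
Proof.
elim: d => [|d IH] kd; first by rewrite leqn0 in kd; rewrite (eqP kd).
case: (ltngtP k d.+1) kd => // [lt_kd _|-> _]; last by rewrite label_depth_le subnn.
rewrite subSn // -[(d - k).+1]addn1 iotaD all_cat /= addSn subnKC // andbT -IH //.
case: ifP => //= _; rewrite ?andbT // andbF.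
by apply/negbTE; rewrite -leqNgt -ltnS.
Qed.

Lemma label_depth_stop Z d x k : (k <= d)%N -> (label_depth Z d x <= k)%N ->
  label_depth Z d x = label_depth Z k x.
Proof.
elim: d => [|d IH] kd; first by rewrite leqn0 in kd; rewrite (eqP kd).
case: (ltngtP k d.+1) kd => // [lt_kd _|-> //] /=.
by case: ifP => _ le_k; [rewrite leqNgt lt_kd in le_k | apply: IH].
Qed.

Lemma label_depth_lca Z d x y : (d <= lca_depth x y)%N -> (d <= D)%N ->
  label_depth Z d x = label_depth Z d y.
Proof.
elim: d => //= d IH le_d dD.
have /eqP -> : anc d.+1 x == anc d.+1 y by rewrite eq_anc_lca.
by rewrite IH // ltnW.
Qed.

Definition path_below x m : seq key := [seq anc e x | e <- iota m.+1 (D - m)].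

Definition split_nodes x y : seq key :=
  path_below x (lca_depth x y) ++ path_below y (lca_depth x y).

Lemma mem_iota_below m e : (m <= D)%N ->
  (e \in iota m.+1 (D - m)) = (m < e <= D)%N.
Proof. by move=> mD; rewrite mem_iota addSn subnKC // ltnS. Qed.

Lemma eq_chi_split_nodes Z x y :
  (chi Z x == chi Z y) = all (fun u => ~~ Zk Z u) (split_nodes x y).
Proof.
have lcaD := lca_depth_le x y.
rewrite /split_nodes all_cat !all_map -!label_depth_leP // /chi !chi_dE.
apply/eqP/andP => [eq_xy|[le_x le_y]].
  have eq_depth := anc_depth_inj (label_depth_le Z D x) (label_depth_le Z D y) eq_xy.
  rewrite -eq_depth in eq_xy *.
  by rewrite -eq_anc_lca ?eq_xy ?eqxx ?label_depth_le.
rewrite (label_depth_stop lcaD le_x) (label_depth_stop lcaD le_y).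
rewrite (label_depth_lca Z (leqnn _) lcaD); apply/eqP.
by rewrite eq_anc_lca ?label_depth_le // (leq_trans (label_depth_le _ _ _)).
Qed.

Lemma uniq_split_nodes x y : uniq (split_nodes x y).
Proof.
have mem_below e : e \in iota (lca_depth x y).+1 (D - lca_depth x y) ->
    (lca_depth x y < e <= D)%N.
  by rewrite mem_iota_below // lca_depth_le.
have anc_inj_below (z : leaf) :
    {in iota (lca_depth x y).+1 (D - lca_depth x y) &, injective (fun e => anc e z)}.
  by move=> d e /mem_below/andP[_ dD] /mem_below/andP[_ eD]; apply: anc_depth_inj.
rewrite cat_uniq !map_inj_in_uniq ?iota_uniq ?andbT //=.
apply/hasPn => u /mapP[e /mem_below/andP[lt_e eD] ->].
apply/mapP => -[e' /mem_below/andP[_ eD'] eq_yx].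
have eq_depth := anc_depth_inj eD eD' eq_yx; subst e'.
by move: lt_e; rewrite ltnNge -eq_anc_lca // eq_yx eqxx.
Qed.

Lemma split_nodes_nonroot x y : all (@is_nonroot_node mu D) (split_nodes x y).
Proof.
rewrite all_cat !all_map; apply/andP; split; apply/allP => e;
  rewrite mem_iota_below ?lca_depth_le // => /andP[lt_e eD] /=;
  apply: is_nonroot_anc; rewrite eD andbT; exact: leq_ltn_trans lt_e.
Qed.

End Labels.

Section LabelAndWildnessLaws.
Variables (R : realType) (mu D : nat).
Local Notation leaf := (leaf mu D).
Local Notation key := (key mu D).

Lemma sum_PZ_unmarked (rho : nat -> R) (s : seq key) :
  uniq s -> all (@is_nonroot_node mu D) s ->
  \sum_(Z : Zlab mu D) PZ rho Z * (all (fun u => ~~ Zk Z u) s)%:R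
  = \prod_(u <- s) (1 - rho (key_depth u)).
Proof.
move=> uniq_s nonroot_s.
pose s' : seq (nonroot mu D) := pmap insub s.
have sE : s = map val s'.
  rewrite (pmap_filter (insubK _)); apply/esym/all_filterP.
  by rewrite (eq_all (isSome_insub _)).
rewrite sE map_inj_uniq in uniq_s; last exact: val_inj.
rewrite sE big_map -(sum_bernoulli_all_false _ uniq_s); apply: eq_bigr => Z _.
by rewrite all_map natr_all; congr (_ * _); apply: eq_bigr => u _; rewrite /= /Zk valK.
Qed.

Lemma sum_PZ (rho : nat -> R) : \sum_(Z : Zlab mu D) PZ rho Z = 1.
Proof.
have := sum_PZ_unmarked rho (s := [::]) isT isT; rewrite big_nil => <-.
by apply: eq_bigr => Z _; rewrite mulr1.
Qed.

Lemma sum_PW (omega : R) : \sum_(W : Wild mu D) PW omega W = 1.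
Proof.
have := sum_bernoulli_all_false (fun _ : leaf => omega) (s := [::]) isT.
by rewrite big_nil => <-; apply: eq_bigr => W _; rewrite big_nil mulr1.
Qed.

Lemma sum_PW_or (omega : R) (x y : leaf) : x != y ->
  \sum_(W : Wild mu D) PW omega W * (W x || W y)%:R = omega * (2 - omega).
Proof.
move=> neq_xy.
have := sum_bernoulli_all_false (fun _ : leaf => omega) (s := [:: x; y]).
rewrite /= inE neq_xy !big_cons big_nil !mulr1 => /(_ isT) tame.
have orE (a b : bool) : (a || b)%:R = 1 - (~~ a)%:R * (~~ b)%:R :> R.
  by case: a; case: b; rewrite /= ?mulr1 ?mulr0 ?mul0r ?subr0 ?subrr.
under eq_bigr => W _ do rewrite orE mulrBr mulr1.
have {}tame : \sum_W PW omega W * ((~~ W x)%:R * (~~ W y)%:R)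
    = (1 - omega) * (1 - omega).
  by rewrite -tame; apply: eq_bigr => W _; rewrite !big_cons big_nil mulr1.
by rewrite sumrB sum_PW tame; ring.
Qed.

End LabelAndWildnessLaws.

Section AttemptLaw.
Variables (R : realType) (mu D : nat) (nu : R) (q : nat -> R).
Hypotheses (mu_gt0 : (0 < mu)%N) (nu_neq0 : nu != 0).
Local Notation leaf := (leaf mu D).
Local Notation key := (key mu D).

Let mu_exp_neq0 n : (mu%:R : R) ^+ n != 0.
Proof. by rewrite expf_neq0 // pnatr_eq0 -lt0n. Qed.

Lemma sum_leaf_const (c : R) : \sum_(x : leaf) c = mu%:R ^+ D * c.
Proof. by rewrite sumr_const card_ffun !card_ord -natrX mulr_natl. Qed.

Lemma F_anc d (x : leaf) : (d <= D)%N -> F nu d (anc d x) = nu * mu%:R ^+ (D - d).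
Proof.
move=> dD; rewrite /F (eq_bigl [pred y | anc d y == anc d x]) //.
by rewrite sumr_const card_anc // -natrX mulr_natr.
Qed.

Lemma F_root : F nu 0 (root_key mu D) = nu * mu%:R ^+ D.
Proof. by rewrite -(anc0 [ffun _ => Ordinal mu_gt0]) F_anc // subn0. Qed.

Lemma walkE d (v : key) (x : leaf) : (d <= D)%N ->
  walk nu d v x = (anc d x == v)%:R / mu%:R ^+ (D - d).
Proof.
move=> dD; rewrite /walk; case: eqP => _; last by rewrite mul0r.
rewrite mul1r (eq_big_nat _ _ (F2 := fun _ => mu%:R^-1)) ?prodr_const_nat ?exprVn //.
move=> j /andP[dj jD]; rewrite !F_anc ?(ltnW jD) // -(subnSK jD) exprS.
by field; rewrite mu_exp_neq0 -[mu%:R]expr1 mu_exp_neq0.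
Qed.

Lemma att_weightE (s : 'I_D) (v : key) (x y : leaf) :
  att_weight nu q (s, v, x, y) =
  q s.+1 / mu%:R ^+ D / mu%:R ^+ s.+1 *
  (anc (D - s.+1) x == v)%:R * (anc (D - s.+1) y == v)%:R.
Proof.
have sD : (s.+1 <= D)%N := ltn_ord s.
rewrite /att_weight !walkE ?leq_subr // subKn //.
case: (eqVneq (anc (D - s.+1) x) v) => [<-|]; last by rewrite !(mul0r, mulr0).
rewrite F_anc ?leq_subr // subKn // F_root.
by field; rewrite !mu_exp_neq0.
Qed.

Lemma sum_att_weight_pairs (Q : leaf -> leaf -> R) :
  \sum_(a : attempt mu D) att_weight nu q a * Q a.1.2 a.2 =
  \sum_(s < D) q s.+1 / mu%:R ^+ D / mu%:R ^+ s.+1 *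
     \sum_x \sum_y (anc (D - s.+1) x == anc (D - s.+1) y)%:R * Q x y.
Proof.
rewrite sum_quadruple; apply: eq_bigr => s _.
rewrite exchange_big mulr_sumr; apply: eq_bigr => x _.
rewrite exchange_big mulr_sumr; apply: eq_bigr => y _.
transitivity (\sum_v (anc (D - s.+1) x == v)%:R *
   (q s.+1 / mu%:R ^+ D / mu%:R ^+ s.+1 * (anc (D - s.+1) y == v)%:R * Q x y)).
  by apply: eq_bigr => v _; rewrite att_weightE; ring.
by rewrite sum_eq_indicator eq_sym; ring.
Qed.

Lemma sum_att_weight : \sum_(s < D) q s.+1 = 1 ->
  \sum_(a : attempt mu D) att_weight nu q a = 1.
Proof.
move=> q1; rewrite -[RHS]q1.
under eq_bigr => a _ do rewrite -[att_weight _ _ _]mulr1.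
rewrite (sum_att_weight_pairs (fun _ _ => 1)); apply: eq_bigr => s _.
have sD : (s.+1 <= D)%N := ltn_ord s.
have below (x : leaf) :
    \sum_y (anc (D - s.+1) x == anc (D - s.+1) y)%:R * 1 = mu%:R ^+ s.+1 :> R.
  under eq_bigr => y _ do rewrite mulr1 eq_sym.
  by rewrite sum_natr_pred card_anc ?leq_subr // subKn // natrX.
under eq_bigr => x _ do rewrite below.
by rewrite sum_leaf_const; field; rewrite !mu_exp_neq0.
Qed.

Lemma sum_lca_below (H : nat -> R) d (x : leaf) : (d <= D)%N ->
  \sum_y (anc d x == anc d y)%:R * ((x != y)%:R * H (lca_depth x y)) =
  \sum_(t < D - d) (mu%:R - 1) * mu%:R ^+ t * H (D - t.+1)%N.
Proof.
move=> dD.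
under eq_bigr => y _ do rewrite eq_anc_lca // -lca_depth_ltD.
rewrite (@sum_by_fibers _ _ (lca_depth x)
  (fun k => (d <= k)%:R * ((k < D)%:R * H k)) D.+1); last first.
  by move=> y; rewrite ltnS lca_depth_le.
rewrite big_ord_recr /= ltnn mulr0n !(mul0r, mulr0) addr0.
have fiber (k : 'I_D) : #|[pred y | lca_depth x y == k]|%:R
    = (mu%:R - 1) * mu%:R ^+ (D - k.+1) :> R.
  rewrite card_lca_depth // -(subnSK (ltn_ord k)) expnS.
  by rewrite -{2}[(mu ^ _)%N]mul1n -mulnBl natrM natrB // natrX.
under eq_bigr => k _ do rewrite fiber.
rewrite -(big_mkord xpredT (fun k => (mu%:R - 1) * mu%:R ^+ (D - k.+1) *
                                    ((d <= k)%:R * ((k < D)%:R * H k)))).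
rewrite big_rev_mkord subn0.
rewrite (big_ord_widen D (fun t => (mu%:R - 1) * mu%:R ^+ t * H (D - t.+1)%N)) ?leq_subr //.
rewrite [RHS]big_mkcond; apply: eq_bigr => t _ /=.
have tD := ltn_ord t.
rewrite (_ : D - (D - t.+1).+1 = t)%N; last by lia.
rewrite (_ : D - t.+1 < D)%N; last by lia.
rewrite (_ : (d <= D - t.+1)%N = (t < D - d)%N); last by apply/idP/idP; lia.
by case: ifP; rewrite ?mul1r ?mul0r ?mulr0.
Qed.

Lemma sum_att_weight_lca (H : nat -> R) :
  \sum_(a : attempt mu D) att_weight nu q a *
     ((a.1.2 != a.2)%:R * H (lca_depth a.1.2 a.2)) =
  \sum_(s < D) q s.+1 / mu%:R ^+ s.+1 *
     \sum_(t < s.+1) (mu%:R - 1) * mu%:R ^+ t * H (D - t.+1)%N.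
Proof.
rewrite (sum_att_weight_pairs (fun x y => (x != y)%:R * H (lca_depth x y))).
apply: eq_bigr => s _; have sD : (s.+1 <= D)%N := ltn_ord s.
under eq_bigr => x _ do rewrite sum_lca_below ?leq_subr // subKn //.
by rewrite sum_leaf_const; field; rewrite !mu_exp_neq0.
Qed.

End AttemptLaw.

Section Events.
Variables (R : realType) (mu D : nat) (nu : R) (rho : nat -> R) (omega : R) (q : nat -> R).
Local Notation leaf := (leaf mu D).
Local Notation event := (Zlab mu D -> Wild mu D -> attempt mu D -> bool).

Definition event_prob (E : event) (a : attempt mu D) : R :=
  \sum_(Z : Zlab mu D) \sum_(W : Wild mu D) PZ rho Z * PW omega W * (E Z W a)%:R.

Definition same_label_prob m : R := \prod_(m.+1 <= e < D.+1) (1 - rho e) ^+ 2.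

Lemma prod_split_nodes (x y : leaf) :
  \prod_(u <- split_nodes x y) (1 - rho (key_depth u)) = same_label_prob (lca_depth x y).
Proof.
rewrite big_cat /= !big_map -big_split /same_label_prob /index_iota subSS.
rewrite big_seq [RHS]big_seq; apply: eq_bigr => e.
by rewrite mem_iota_below ?lca_depth_le // => /andP[_ eD]; rewrite !key_depth_anc // expr2.
Qed.

Lemma event_prob_split (f : Zlab mu D -> R) (g : Wild mu D -> R) (E : event) a :
  (forall Z W, (E Z W a)%:R = f Z * g W) ->
  event_prob E a = (\sum_Z PZ rho Z * f Z) * (\sum_W PW omega W * g W).
Proof.
move=> Efg; rewrite big_distrl; apply: eq_bigr => Z _.
by rewrite big_distrr; apply: eq_bigr => W _; rewrite Efg /=; ring.
Qed.

Lemma event_prob_agreement s v (x y : leaf) :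
  event_prob (@agreement mu D) (s, v, x, y) = (x != y)%:R * same_label_prob (lca_depth x y).
Proof.
rewrite (@event_prob_split (fun Z => (x != y)%:R *
  (all (fun u => ~~ Zk Z u) (split_nodes x y))%:R) (fun _ => 1)); last first.
  by move=> Z W; rewrite /= eq_chi_split_nodes mulr1 -mulnb natrM.
under [X in X * _]eq_bigr => Z _ do rewrite mulrCA.
rewrite -mulr_sumr sum_PZ_unmarked ?uniq_split_nodes ?split_nodes_nonroot //.
by rewrite (eq_bigr (PW omega) (fun W _ => mulr1 _)) sum_PW mulr1 prod_split_nodes.
Qed.

Lemma event_prob_conflict s v (x y : leaf) :
  event_prob (@conflict mu D) (s, v, x, y) =
  (x != y)%:R * ((1 - same_label_prob (lca_depth x y)) * (omega * (2 - omega))).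
Proof.
case: (eqVneq x y) => [<-|neq_xy].
  by rewrite mul0r; apply: big1 => Z _; apply: big1 => W _; rewrite /= eqxx mulr0.
rewrite mul1r (@event_prob_split (fun Z =>
  1 - (all (fun u => ~~ Zk Z u) (split_nodes x y))%:R) (fun W => (W x || W y)%:R)).
  rewrite sum_PW_or //; congr (_ * _).
  under eq_bigr => Z _ do rewrite mulrBr mulr1.
  rewrite sumrB sum_PZ sum_PZ_unmarked ?uniq_split_nodes ?split_nodes_nonroot //.
  by rewrite prod_split_nodes.
by move=> Z W; rewrite /= -eq_chi_split_nodes; case: (_ == _); case: (_ || _);
  rewrite /= ?subrr ?subr0 ?mul0r ?mul1r.
Qed.

Lemma expected_countE (E : event) n :
  \sum_(a : attempt mu D) att_weight nu q a = 1 ->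
  expected_count nu rho omega q E n =
  n%:R * \sum_(a : attempt mu D) att_weight nu q a * event_prob E a.
Proof.
move=> w1; rewrite /expected_count.
transitivity (\sum_Z \sum_W PZ rho Z * PW omega W *
   (n%:R * \sum_(a : attempt mu D) att_weight nu q a * (E Z W a)%:R)).
  apply: eq_bigr => Z _; apply: eq_bigr => W _.
  by rewrite -sum_iid_count // mulr_sumr; apply: eq_bigr => t _; ring.
under eq_bigr => Z _ do under eq_bigr => W _ do rewrite !mulr_sumr.
rewrite mulr_sumr; under eq_bigr => Z _ do rewrite exchange_big /=.
rewrite exchange_big /=; apply: eq_bigr => a _.
rewrite /event_prob !mulr_sumr; apply: eq_bigr => Z _.
by rewrite !mulr_sumr; apply: eq_bigr => W _; ring.
Qed.

End Events.

Lemma cvg_expected_count (R : realType) (mu D : nat) (nu omega : R)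
    (rho q pN H B : nat -> R) (E : Zlab mu D -> Wild mu D -> attempt mu D -> bool) :
  (0 < mu)%N -> nu != 0 -> \sum_(1 <= s < D.+1) q s = 1 ->
  series (fun n => n%:R * pN n) @ \oo --> (nu * mu%:R ^+ D / 2 : R) ->
  (forall s v x y, event_prob rho omega E (s, v, x, y) = (x != y)%:R * H (lca_depth x y)) ->
  (forall t, (t < D)%N -> H (D - t.+1)%N = B t) ->
  series (fun n => pN n * expected_count nu rho omega q E n) @ \oo -->
    nu * mu%:R ^+ D * (mu%:R - 1) / 2 *
    \sum_(1 <= s < D.+1) (q s * mu%:R ^- s * \sum_(0 <= t < s) B t * mu%:R ^+ t).
Proof.
move=> mu_gt0 nu_neq0 q1 cvgN probE HB.
have q1' : \sum_(s < D) q s.+1 = 1 by rewrite -q1 big_add1 big_mkord.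
set p := \sum_(a : attempt mu D) att_weight nu q a * event_prob rho omega E a.
have -> : series (fun n => pN n * expected_count nu rho omega q E n) =
          (fun N => p * series (fun n => n%:R * pN n) N).
  apply/funext => N; rewrite /series /= mulr_sumr; apply: eq_bigr => n _.
  by rewrite expected_countE ?sum_att_weight // -/p; ring.
suff -> : nu * mu%:R ^+ D * (mu%:R - 1) / 2 *
    \sum_(1 <= s < D.+1) (q s * mu%:R ^- s * \sum_(0 <= t < s) B t * mu%:R ^+ t)
    = p * (nu * mu%:R ^+ D / 2) by apply: cvgM => //; apply: cvg_cst.
rewrite /p (eq_bigr (fun a => att_weight nu q a *
  ((a.1.2 != a.2)%:R * H (lca_depth a.1.2 a.2)))); last first.
  by case=> [[[s v] x] y] _; rewrite probE.
rewrite sum_att_weight_lca // big_add1 /= big_mkord mulr_sumr big_distrl.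
apply: eq_bigr => s _ /=; rewrite big_mkord.
have -> : \sum_(t < s.+1) (mu%:R - 1) * mu%:R ^+ t * H (D - t.+1)%N
    = (mu%:R - 1) * \sum_(t < s.+1) B t * mu%:R ^+ t.
  rewrite mulr_sumr; apply: eq_bigr => t _; rewrite HB; first by ring.
  exact: leq_trans (ltn_ord t) (ltn_ord s).
ring.
Qed.

(* [pN n] is P(N = n). *)
Theorem corollary6p6 (R : realType) (mu D : nat) (nu omega : R)
    (rho q pN : nat -> R) :
  (2 <= mu)%N -> (1 <= D)%N -> 0 < nu ->
  (forall d, (1 <= d <= D)%N -> 0 <= rho d <= 1) ->
  0 <= omega <= 1 ->
  (forall s, (1 <= s <= D)%N -> 0 <= q s) ->
  \sum_(1 <= s < D.+1) q s = 1 ->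
  (forall n, 0 <= pN n) ->
  series pN @ \oo --> (1 : R) ->
  series (fun n => n%:R * pN n) @ \oo --> (nu * mu%:R ^+ D / 2 : R) ->
  let A t := \prod_(D - t <= d < D.+1) (1 - rho d) ^+ 2 in
  let C t := (1 - A t) * (omega * (2 - omega)) in
  let K := nu * mu%:R ^+ D * (mu%:R - 1) / 2 in
  series (fun n => pN n *
            expected_count nu rho omega q (@agreement mu D) n) @ \oo -->
    K * \sum_(1 <= s < D.+1) (q s * mu%:R ^- s *
                               \sum_(0 <= t < s) A t * mu%:R ^+ t)
  /\
  series (fun n => pN n *
            expected_count nu rho omega q (@conflict mu D) n) @ \oo -->
    K * \sum_(1 <= s < D.+1) (q s * mu%:R ^- s *
                               \sum_(0 <= t < s) C t * mu%:R ^+ t).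
Proof.
move=> mu_ge2 _ nu_gt0 _ _ _ q1 _ _ cvgN A C K.
have mu_gt0 : (0 < mu)%N by apply: leq_trans mu_ge2.
have nu_neq0 : nu != 0 by rewrite gt_eqF.
have sameA t : (t < D)%N -> same_label_prob D rho (D - t.+1) = A t.
  by move=> tD; rewrite /same_label_prob /A subnSK.
split.
  apply: (cvg_expected_count (H := same_label_prob D rho)) => //.
  exact: event_prob_agreement.
apply: (cvg_expected_count
  (H := fun m => (1 - same_label_prob D rho m) * (omega * (2 - omega)))) => //.
  exact: event_prob_conflict.
by move=> t tD; rewrite /C sameA.
Qed.
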